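(* Consider the two-sided market model described in the context and the social welfare $$\mathcal S(x_t,y_t)=\int_{x_t}^{\infty}\phi\Big(\frac{\sqrt{T_0\int_{y_t}^{\infty}y^{1-\beta}dy}}{\sqrt{\int_{x_t}^{\infty}x^{1-\gamma}dx}}\,x\Big)x^{-\gamma}dx+\lambda\sqrt{T_0}\sqrt{\int_{x_t}^{\infty}x^{1-\gamma}dx}\sqrt{\int_{y_t}^{\infty}y^{1-\beta}dy}-a\int_{y_t}^{\infty}y^{1-\beta}dy$$ over $x_t\ge x_0$, $y_t\ge y_0$. Then the welfare-maximizing thresholds are $x_t=x_0$ and $$y_t=\begin{cases} y_0, & \text{if } a\leq \frac{1}{2}\big(\int_{x_0}^{\infty}\phi'(x\bar Y)x^{1-\gamma}dx+\lambda \bar X\big),\\ \widehat{y}, & \text{if } a> \frac{1}{2}\big(\int_{x_0}^{\infty}\phi'(x\bar Y)x^{1-\gamma}dx+\lambda \bar X\big),\end{cases}$$ where $\widehat y$ is the solution $y_t$ of $$a-\frac{1}{2}\Big(\int_{x_0}^{\infty}\phi'\Big(x\sqrt{\bar Y\textstyle\int_{y_t}^{\infty}y^{1-\beta}dy}\Big)x^{1-\gamma}dx+\lambda \bar X\Big)\frac{\sqrt{\bar Y}}{\sqrt{\int_{y_t}^{\infty}y^{1-\beta}dy}}=0.$$ In terms of prices implementing the social optimum: if $a\leq \frac{1}{2}(\int_{x_0}^{\infty}\phi'(x\bar Y)x^{1-\gamma}dx+\lambda \bar X)$, then $\widehat b_{opt}\le \frac{\lambda}{\gamma-2}x_0^{2-\gamma}-a$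 and $\widehat c_{opt}\le \phi(\frac{1}{\beta-2}y_0^{2-\beta}x_0)$; if $a> \frac{1}{2}(\int_{x_0}^{\infty}\phi'(x\bar Y)x^{1-\gamma}dx+\lambda \bar X)$, then $$\widehat b_{opt}=\Big(\frac{2\lambda}{\frac{1}{\bar X}\int_{x_0}^{\infty}\phi'\big(\sqrt{\bar Y\frac{1}{\beta-2}\widehat{y}^{2-\beta}}\,x\big)x^{1-\gamma}dx+\lambda}-1\Big)a,\qquad \widehat c_{opt}\le \phi\Big(\sqrt{\bar Y\tfrac{1}{\beta-2}\widehat{y}^{2-\beta}}\,x_0\Big).$$
   Context: Model (a monopolist ISP between consumers and content providers (CPs)). Fix exponents $\gamma>2$, $\beta>2$. Consumer types $x$ have density $x^{-\gamma}$ on $x\ge x_0:=(\frac{1}{\gamma-1})^{\frac{1}{\gamma-1}}$; CP types $y$ have density $y^{-\beta}$ on $y\ge y_0:=(\frac{1}{\beta-1})^{\frac{1}{\beta-1}}$. $\bar X=\int_{x_0}^\infty x^{1-\gamma}dx=\frac{x_0^{2-\gamma}}{\gamma-2}$, $\bar Y=\int_{y_0}^\infty y^{1-\beta}dy=\frac{y_0^{2-\beta}}{\beta-2}$, $T_0=\bar X\bar Y$. If consumers of types $\ge x_t$ and CPs of types $\ge y_t$ participate, total traffic is $T=\sqrt{T_0\int_{x_t}^\infty x^{1-\gamma}dx\int_{y_t}^\infty y^{1-\beta}dy}$ and speed is $T_0/T$. A participating consumer of type $x$ gets utility $\phi\big(\int_{y_t}^\infty \frac{T_0}{T}x y^{1-\beta}dy\big)-c$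 ($c$ = membership fee); a participating CP of type $y$ gets $\lambda\int_{x_t}^\infty\frac{T_0}{T}x^{1-\gamma}y\,dx-by-ay$, with $\lambda>0$ an exchange rate, $a\ge0$ the CP cost parameter, $b$ the CP fee. The function $\phi$ is a differentiable, nonnegative, increasing, concave function on $[0,\infty)$. Prices $(b,c)$ implement thresholds $(x_t,y_t)$ when exactly consumers of type $\ge x_t$ and CPs of type $\ge y_t$ have nonnegative utility; $(\widehat b_{opt},\widehat c_{opt})$ denote prices implementing the welfare-maximizing thresholds. *)

From Stdlib Require Import Reals.
From Coquelicot Require Import Coquelicot.
Open Scope R_scope.

Definition Iinf (f : R -> R) (a : R) : R :=
  RInt_gen f (at_point a) (Rbar_locally p_infty).

(* lowest consumer / CP types *)
Definition x0 (gam : R) : R := Rpower (1 / (gam - 1)) (1 / (gam - 1)).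
Definition y0 (bet : R) : R := Rpower (1 / (bet - 1)) (1 / (bet - 1)).

Definition IX (gam t : R) : R := Iinf (fun x => Rpower x (1 - gam)) t.
Definition IY (bet t : R) : R := Iinf (fun y => Rpower y (1 - bet)) t.

Definition Xbar (gam : R) : R := IX gam (x0 gam).
Definition Ybar (bet : R) : R := IY bet (y0 bet).
Definition T0 (gam bet : R) : R := Xbar gam * Ybar bet.

(* total traffic when types >= xt, >= yt participate *)
Definition traffic (gam bet xt yt : R) : R :=
  sqrt (T0 gam bet * IX gam xt * IY bet yt).
Definition speed (gam bet xt yt : R) : R := T0 gam bet / traffic gam bet xt yt.

(* utility of a participating consumer of type x (membership fee c) *)
Definition consumer_utility (gam bet : R) (phi : R -> R) (c xt yt x : R) : R :=
  phi (Iinf (fun y => speed gam bet xt yt * x * Rpower y (1 - bet)) yt) - c.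

(* utility of a participating CP of type y (CP fee b, cost parameter a) *)
Definition cp_utility (gam bet lam a b xt yt y : R) : R :=
  lam * Iinf (fun x => speed gam bet xt yt * Rpower x (1 - gam) * y) xt
  - b * y - a * y.

(* (b,c) implement (xt,yt): among existing types (x >= x0, y >= y0), types at or
   above the threshold get nonnegative utility (participate) and types below the
   threshold get nonpositive utility (do not strictly prefer joining). *)
Definition implements (gam bet lam a : R) (phi : R -> R) (b c xt yt : R) : Prop :=
  (forall x, x0 gam <= x ->
     (xt <= x -> 0 <= consumer_utility gam bet phi c xt yt x) /\
     (x < xt -> consumer_utility gam bet phi c xt yt x <= 0)) /\
  (forall y, y0 bet <= y ->
     (yt <= y -> 0 <= cp_utility gam bet lam a b xt yt y) /\
     (y < yt -> cp_utility gam bet lam a b xt yt y <= 0)).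

Definition welfare (gam bet lam a : R) (phi : R -> R) (xt yt : R) : R :=
  Iinf (fun x => phi (sqrt (T0 gam bet * IY bet yt) / sqrt (IX gam xt) * x)
                 * Rpower x (- gam)) xt
  + lam * sqrt (T0 gam bet) * sqrt (IX gam xt) * sqrt (IY bet yt)
  - a * IY bet yt.

Definition welfare_max (gam bet lam a : R) (phi : R -> R) (xt yt : R) : Prop :=
  x0 gam <= xt /\ y0 bet <= yt /\
  forall xt' yt', x0 gam <= xt' -> y0 bet <= yt' ->
    welfare gam bet lam a phi xt' yt' <= welfare gam bet lam a phi xt yt.

Definition a_thr (gam bet lam : R) (phi : R -> R) : R :=
  / 2 * (Iinf (fun x => Derive phi (x * Ybar bet) * Rpower x (1 - gam)) (x0 gam)
         + lam * Xbar gam).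

Definition yhat_eq (gam bet lam a : R) (phi : R -> R) (yt : R) : R :=
  a - / 2 * (Iinf (fun x => Derive phi (x * sqrt (Ybar bet * IY bet yt))
                            * Rpower x (1 - gam)) (x0 gam)
             + lam * Xbar gam) * (sqrt (Ybar bet) / sqrt (IY bet yt)).

(* At the threshold [xt = x0], write [m = sqrt (Ybar * IY yt)] for the rate at
   which content reaches consumers: a consumer of type [x] gets [phi (m x)], and
   the welfare is [W m = F m + lam Xbar m - a m^2 / Ybar] with
   [F m = \int_{x0}^oo phi (m x) x^-gam dx].  Concavity of [phi] makes [F]
   concave with supergradient [J m = \int_{x0}^oo phi' (x m) x^(1-gam) dx], so
   [W] is concave with slope [J m + lam Xbar - 2 a m / Ybar], strictly
   decreasing when [a > 0].  As [yt] ranges over [[y0, oo)], [m] ranges over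
   [(0, Ybar]], with [m = Ybar] at [y0]: the optimum is [y0] when the slope at
   [Ybar] is nonnegative, i.e. [a <= a_thr], and otherwise the unique zero of
   the slope, which exists since [J] is continuous and is the equation defining
   [yhat].  Raising [xt] above [x0] never helps: substituting [x = c y] and
   using [phi (T z) <= T phi z] for [T >= 1], the consumer term does not grow,
   and the traffic term shrinks.  At [xt = x0] the utility of a CP of type [y]
   is [y (lam speed Xbar - b - a)], so participation of [y0] bounds [b], and
   participation of [yhat] together with abstention of [y0 < yhat] fixes it. *)

From Stdlib Require Import Reals Lra FunctionalExtensionality.
From Coquelicot Require Import Coquelicot.
Open Scope R_scope.

Definition is_Iinf (f : R -> R) (a l : R) : Prop :=
  (forall b, a <= b -> ex_RInt f a b) /\
  filterlim (fun b => RInt f a b) (Rbar_locally p_infty) (locally l).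

Lemma is_Iinf_unique f a l : is_Iinf f a l -> Iinf f a = l.
Proof.
  intros [Hex Hlim]. apply is_RInt_gen_unique.
  intros P HP. destruct (Hlim P HP) as [M HM].
  apply Filter_prod with (fun x => x = a) (fun b => a <= b /\ M < b).
  - reflexivity.
  - exists (Rmax a M). intros x Hx. split.
    + pose proof (Rmax_l a M); lra.
    + pose proof (Rmax_r a M); lra.
  - intros x y -> [Hy1 Hy2]. exists (RInt f a y). split.
    + apply RInt_correct, Hex; lra.
    + apply HM; lra.
Qed.

Lemma is_Iinf_ext f g a l :
  (forall x, a <= x -> f x = g x) -> is_Iinf f a l -> is_Iinf g a l.
Proof.
  intros Hfg [Hex Hlim]. split.
  - intros b Hb. apply ex_RInt_ext with f; [|auto].
    intros x Hx. rewrite Rmin_left, Rmax_right in Hx by lra. apply Hfg; lra.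
  - apply (filterlim_ext_loc (fun b => RInt f a b)); [|exact Hlim].
    exists a. intros b Hb. apply RInt_ext. intros x Hx.
    rewrite Rmin_left, Rmax_right in Hx by lra. apply Hfg; lra.
Qed.

Lemma is_Iinf_plus f g a l1 l2 :
  is_Iinf f a l1 -> is_Iinf g a l2 -> is_Iinf (fun x => f x + g x) a (l1 + l2).
Proof.
  intros [Hex1 H1] [Hex2 H2]. split.
  - intros b Hb. apply (ex_RInt_plus f g); auto.
  - apply (filterlim_ext_loc (fun b => RInt f a b + RInt g a b)).
    + exists a. intros b Hb. symmetry. apply (RInt_plus f g); [apply Hex1|apply Hex2]; lra.
    + apply (filterlim_comp_2 _ _ Rplus H1 H2), (filterlim_plus l1 l2).
Qed.

Lemma is_Iinf_scal f a k l : is_Iinf f a l -> is_Iinf (fun x => k * f x) a (k * l).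
Proof.
  intros [Hex H]. split.
  - intros b Hb. apply (ex_RInt_scal f); auto.
  - apply (filterlim_ext_loc (fun b => k * RInt f a b)).
    + exists a. intros b Hb. symmetry. apply (RInt_scal f); apply Hex; lra.
    + eapply filterlim_comp; [exact H|apply (filterlim_scal_r k l)].
Qed.

Lemma is_Iinf_le f g a l1 l2 :
  (forall x, a <= x -> f x <= g x) -> is_Iinf f a l1 -> is_Iinf g a l2 -> l1 <= l2.
Proof.
  intros Hfg [Hex1 H1] [Hex2 H2].
  apply (filterlim_le (F := Rbar_locally p_infty)
           (fun b => RInt f a b) (fun b => RInt g a b) l1 l2); auto.
  exists a. intros b Hb. apply RInt_le; [lra|apply Hex1; lra|apply Hex2; lra|].
  intros x Hx. apply Hfg. lra.
Qed.

Lemma is_Iinf_ge0 f a l : (forall x, a <= x -> 0 <= f x) -> is_Iinf f a l -> 0 <= l.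
Proof.
  intros Hf [Hex H].
  apply (filterlim_le (F := Rbar_locally p_infty) (fun _ => 0) (fun b => RInt f a b) 0 l); auto.
  - exists a. intros b Hb. apply RInt_ge_0; [lra|apply Hex; lra|].
    intros x Hx. apply Hf. lra.
  - apply filterlim_const.
Qed.

Lemma ex_RInt_inside (f : R -> R) a u v :
  (forall b, a <= b -> ex_RInt f a b) -> a <= u <= v -> ex_RInt f u v.
Proof.
  intros Hex Huv.
  apply (ex_RInt_Chasles_2 (V := R_CompleteNormedModule) f a); [lra|apply Hex; lra].
Qed.

Lemma RInt_Chasles_sub (f : R -> R) a u v :
  (forall b, a <= b -> ex_RInt f a b) -> a <= u <= v -> RInt f a v - RInt f a u = RInt f u v.
Proof.
  intros Hex Huv.
  rewrite <- (RInt_Chasles f a u v); [|apply Hex; lra|apply (ex_RInt_inside f a); auto; lra].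
  simpl. unfold plus; simpl. ring.
Qed.

Lemma is_Iinf_Chasles f a c l :
  a <= c -> is_Iinf f a l -> is_Iinf f c (l - RInt f a c).
Proof.
  intros Hac [Hex H]. split.
  - intros b Hb. apply (ex_RInt_inside f a); [exact Hex|lra].
  - apply (filterlim_ext_loc (fun b => RInt f a b + - RInt f a c)).
    + exists c. intros b Hb. rewrite <- (RInt_Chasles_sub f a c b Hex) by lra. ring.
    + apply (filterlim_comp_2 _ _ Rplus H (filterlim_const _)), (filterlim_plus l).
Qed.

(* Cauchy criterion: the tails [RInt f u v] are squeezed by those of [h]. *)
Lemma ex_Iinf_dominated f h a L :
  (forall x, a <= x -> 0 <= f x <= h x) ->
  (forall b, a <= b -> ex_RInt f a b) -> is_Iinf h a L -> exists l, is_Iinf f a l.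
Proof.
  intros Hfh Hexf [Hexh Hh].
  destruct (proj1 (filterlim_locally_cauchy (U := R_CompleteSpace)
              (F := Rbar_locally p_infty) (fun b => RInt f a b))) as [l Hl].
  2: { exists l. split; auto. }
  intros eps.
  destruct (proj2 (filterlim_locally_cauchy (F := Rbar_locally p_infty)
              (fun b => RInt h a b)) (ex_intro _ L Hh) eps) as [P [HP HPc]].
  exists (fun u => a <= u /\ P u). split.
  { apply filter_and; auto. exists a. intros; lra. }
  assert (Htail : forall u v, a <= u <= v -> P u -> P v ->
            Rabs (RInt f a v - RInt f a u) < eps).
  { intros u v Huv Pu Pv.
    specialize (HPc u v Pu Pv). change (Rabs (RInt h a v - RInt h a u) < eps) in HPc.
    pose proof (ex_RInt_inside f a u v Hexf Huv). pose proof (ex_RInt_inside h a u v Hexh Huv).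
    assert (0 <= RInt f u v).
    { apply RInt_ge_0; [lra|assumption|]. intros x Hx. apply Hfh; lra. }
    assert (RInt f u v <= RInt h u v).
    { apply RInt_le; [lra|assumption|assumption|]. intros x Hx. apply Hfh; lra. }
    rewrite RInt_Chasles_sub in HPc |- * by assumption.
    rewrite Rabs_pos_eq in HPc |- *; lra. }
  intros u v [Hu Pu] [Hv Pv]. change (Rabs (RInt f a v - RInt f a u) < eps).
  destruct (Rle_dec u v).
  - apply Htail; auto.
  - rewrite <- Rabs_Ropp. replace (- _) with (RInt f a u - RInt f a v) by ring.
    apply Htail; auto; lra.
Qed.

Lemma is_Iinf_comp_scal f a u l :
  0 < u -> is_Iinf f (u * a) l -> is_Iinf (fun y => u * f (u * y)) a l.
Proof.
  intros Hu [Hex H].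
  assert (Hlin : forall b, a <= b -> ex_RInt f (u * a + 0) (u * b + 0)).
  { intros b Hb. rewrite !Rplus_0_r. apply Hex. apply Rmult_le_compat_l; lra. }
  assert (Hsubst : forall y, scal u (f (u * y + 0)) = u * f (u * y)).
  { intros y. rewrite Rplus_0_r. reflexivity. }
  split.
  - intros b Hb. eapply ex_RInt_ext; [|apply (ex_RInt_comp_lin f u 0 a b (Hlin b Hb))].
    intros x _. apply Hsubst.
  - apply (filterlim_ext_loc (fun b => RInt f (u * a) (u * b))).
    + exists a. intros b Hb.
      rewrite <- (Rplus_0_r (u * a)), <- (Rplus_0_r (u * b)).
      rewrite <- (RInt_comp_lin f u 0 a b (Hlin b ltac:(lra))).
      apply RInt_ext. intros x _. apply Hsubst.
    + eapply filterlim_comp; [|exact H].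
      intros P [M HM]. exists (M / u). intros x Hx. apply HM.
      apply Rmult_lt_compat_l with (r := u) in Hx; auto.
      replace (u * (M / u)) with M in Hx by (field; lra). exact Hx.
Qed.

Lemma Rpower_pos x e : 0 < Rpower x e.
Proof. apply exp_pos. Qed.

Lemma Rle_Rpower_l_nonpos x y e : 0 < x -> x <= y -> e <= 0 -> Rpower y e <= Rpower x e.
Proof.
  intros Hx Hxy He. unfold Rpower.
  assert (Hln : ln x <= ln y)
    by (destruct Hxy as [Hxy | <-]; [left; apply ln_increasing|]; lra).
  assert (Hexp : e * ln y <= e * ln x) by nra.
  destruct Hexp as [Hlt | ->]; [left; apply exp_increasing, Hlt|lra].
Qed.

Lemma Rpower_1_minus x e : 0 < x -> Rpower x (1 - e) = x * Rpower x (- e).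
Proof.
  intros Hx. replace (1 - e) with (1 + - e) by ring. rewrite Rpower_plus, Rpower_1 by exact Hx.
  reflexivity.
Qed.

Lemma sqrt_Rpower x e : 0 < x -> sqrt (Rpower x e) = Rpower x (e / 2).
Proof.
  intros Hx. rewrite <- Rpower_sqrt by apply Rpower_pos. rewrite Rpower_mult.
  f_equal.
Qed.

Lemma continuous_Rpower e x : 0 < x -> continuous (fun y => Rpower y e) x.
Proof.
  intros Hx. apply (ex_derive_continuous (K := R_AbsRing) (V := R_NormedModule)).
  eexists. apply is_derive_Reals, derivable_pt_lim_power, Hx.
Qed.

Lemma lim_Rpower_p_infty e :
  e < 0 -> filterlim (fun b => Rpower b e) (Rbar_locally p_infty) (locally 0).
Proof.
  intros He. apply filterlim_locally. intros eps.
  exists (exp (ln eps / e)). intros b Hb.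
  change (Rabs (Rpower b e - 0) < eps).
  rewrite Rminus_0_r, Rabs_pos_eq by (left; apply Rpower_pos).
  pose proof (exp_pos (ln eps / e)).
  apply ln_increasing in Hb; [|assumption]. rewrite ln_exp in Hb.
  rewrite <- (exp_ln eps) by apply cond_pos.
  apply exp_increasing.
  apply Rmult_lt_compat_l with (r := - e) in Hb; [|lra].
  replace (- e * (ln eps / e)) with (- ln eps) in Hb by (field; lra). lra.
Qed.

Lemma is_Iinf_Rpower q t :
  q < -1 -> 0 < t -> is_Iinf (fun x => Rpower x q) t (- Rpower t (q + 1) / (q + 1)).
Proof.
  intros Hq Ht.
  set (P x := / (q + 1) * Rpower x (q + 1)).
  assert (HP : forall b, t <= b -> is_RInt (fun x => Rpower x q) t b (P b - P t)).
  { intros b Hb.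
    apply (is_RInt_derive P (fun x => Rpower x q)).
    - intros x Hx. rewrite Rmin_left in Hx by lra.
      apply is_derive_Reals.
      replace (Rpower x q) with (/ (q + 1) * ((q + 1) * Rpower x (q + 1 - 1)))
        by (replace (q + 1 - 1) with q by ring; field; lra).
      apply (derivable_pt_lim_scal (fun y => Rpower y (q + 1))), derivable_pt_lim_power.
      lra.
    - intros x Hx. rewrite Rmin_left in Hx by lra. apply continuous_Rpower. lra. }
  split.
  - intros b Hb. eexists. apply HP, Hb.
  - apply (filterlim_ext_loc (fun b => P b + - P t)).
    + exists t. intros b Hb. symmetry. apply is_RInt_unique, HP. lra.
    + replace (- Rpower t (q + 1) / (q + 1)) with (/ (q + 1) * 0 + - P t)
        by (unfold P; field; lra).
      assert (HPlim : filterlim P (Rbar_locally p_infty) (locally (/ (q + 1) * 0))).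
      { apply (filterlim_comp _ _ _ (fun b => Rpower b (q + 1)) (fun u => / (q + 1) * u)
                 _ (locally 0)).
        - apply lim_Rpower_p_infty. lra.
        - apply (filterlim_scal_r (/ (q + 1)) 0). }
      apply (filterlim_comp_2 _ _ Rplus HPlim (filterlim_const _)).
      apply (filterlim_plus (V := R_NormedModule)).
Qed.

Lemma ex_RInt_continuous_le (f : R -> R) a b :
  a <= b -> (forall x, a <= x <= b -> continuous f x) -> ex_RInt f a b.
Proof.
  intros Hab Hf. apply (ex_RInt_continuous (V := R_CompleteNormedModule)).
  intros x Hx. rewrite Rmin_left, Rmax_right in Hx by lra. apply Hf. lra.
Qed.

Lemma continuous_Rmult_l k x : continuous (fun y => k * y) x.
Proof.
  apply (continuous_mult (K := R_AbsRing) (fun _ => k) (fun y => y));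
    [apply continuous_const|apply continuous_id].
Qed.

Lemma continuous_Rmult_r k x : continuous (fun y => y * k) x.
Proof.
  apply (continuous_mult (K := R_AbsRing) (fun y => y) (fun _ => k));
    [apply continuous_id|apply continuous_const].
Qed.

Lemma derivable_pt_lim_ge_slope f l c :
  derivable_pt_lim f 0 l -> (forall t, 0 < t <= 1 -> c * t <= f t - f 0) -> c <= l.
Proof.
  intros Hf Hslope. apply Rnot_lt_le. intros Hlc.
  destruct (Hf (c - l) ltac:(lra)) as [[d Hd] Hdelta]. simpl in Hdelta.
  set (t := Rmin (d / 2) 1).
  assert (Ht : 0 < t <= 1) by (split; [apply Rmin_glb_lt|apply Rmin_r]; lra).
  assert (Htd : t < d) by (unfold t; pose proof (Rmin_l (d / 2) 1); lra).
  specialize (Hdelta t (Rgt_not_eq _ _ (proj1 Ht)) ltac:(rewrite Rabs_pos_eq; lra)).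
  rewrite Rplus_0_l in Hdelta. apply Rabs_lt_between in Hdelta.
  pose proof (Hslope t Ht).
  assert (f t - f 0 < c * t); [|lra].
  apply Rmult_lt_reg_r with (/ t); [apply Rinv_0_lt_compat; lra|].
  replace (c * t * / t) with c by (field; lra).
  unfold Rdiv in Hdelta. lra.
Qed.

Lemma is_Iinf_IX gam t :
  2 < gam -> 0 < t -> is_Iinf (fun x => Rpower x (1 - gam)) t (Rpower t (2 - gam) / (gam - 2)).
Proof.
  intros Hg Ht. pose proof (is_Iinf_Rpower (1 - gam) t ltac:(lra) Ht) as H.
  replace (1 - gam + 1) with (2 - gam) in H by ring.
  replace (Rpower t (2 - gam) / (gam - 2)) with (- Rpower t (2 - gam) / (2 - gam))
    by (field; lra).
  exact H.
Qed.

(* [IY] and [Ybar] are convertible to [IX] and [Xbar], so the lemmas below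
   about [IX] and [Xbar] also apply to them. *)
Lemma IX_eq gam t : 2 < gam -> 0 < t -> IX gam t = Rpower t (2 - gam) / (gam - 2).
Proof. intros Hg Ht. apply is_Iinf_unique, is_Iinf_IX; assumption. Qed.

Lemma IX_pos gam t : 2 < gam -> 0 < t -> 0 < IX gam t.
Proof.
  intros Hg Ht. rewrite IX_eq by assumption.
  apply Rdiv_lt_0_compat; [apply Rpower_pos|lra].
Qed.

Lemma x0_pos gam : 0 < x0 gam.
Proof. apply Rpower_pos. Qed.

Lemma Xbar_eq gam : 2 < gam -> Xbar gam = Rpower (x0 gam) (2 - gam) / (gam - 2).
Proof. intros Hg. exact (IX_eq gam (x0 gam) Hg (x0_pos gam)). Qed.

Lemma Xbar_pos gam : 2 < gam -> 0 < Xbar gam.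
Proof. intros Hg. exact (IX_pos gam (x0 gam) Hg (x0_pos gam)). Qed.

Lemma IX_antitone gam s t : 2 < gam -> 0 < s -> s <= t -> IX gam t <= IX gam s.
Proof.
  intros Hg Hs Hst. rewrite !IX_eq by lra.
  apply Rmult_le_compat_r; [left; apply Rinv_0_lt_compat; lra|].
  apply Rle_Rpower_l_nonpos; lra.
Qed.

Definition IX_inv (gam V : R) : R := Rpower ((gam - 2) * V) (/ (2 - gam)).

Lemma IX_invK gam V : 2 < gam -> 0 < V -> IX gam (IX_inv gam V) = V.
Proof.
  intros Hg HV. rewrite IX_eq by (assumption || apply Rpower_pos). unfold IX_inv.
  assert (HgV : 0 < (gam - 2) * V) by (apply Rmult_lt_0_compat; lra).
  rewrite Rpower_mult, Rinv_l, Rpower_1 by lra. field. lra.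
Qed.

Lemma IX_K gam t : 2 < gam -> 0 < t -> IX_inv gam (IX gam t) = t.
Proof.
  intros Hg Ht. rewrite IX_eq by assumption. unfold IX_inv.
  replace ((gam - 2) * (Rpower t (2 - gam) / (gam - 2))) with (Rpower t (2 - gam))
    by (field; lra).
  rewrite Rpower_mult, Rinv_r, Rpower_1 by lra. reflexivity.
Qed.

Lemma Iinf_scal_IX gam t k (f : R -> R) :
  2 < gam -> 0 < t -> (forall x, f x = k * Rpower x (1 - gam)) -> Iinf f t = k * IX gam t.
Proof.
  intros Hg Ht Hf. rewrite IX_eq by assumption. apply is_Iinf_unique.
  apply is_Iinf_ext with (fun x => k * Rpower x (1 - gam)); [intros x _; symmetry; apply Hf|].
  apply is_Iinf_scal, is_Iinf_IX; assumption.
Qed.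

Section Welfare.

Variable phi : R -> R.
Hypothesis phi_ge0 : forall z, 0 <= z -> 0 <= phi z.
Hypothesis phi_incr : forall z w, 0 <= z -> z <= w -> phi z <= phi w.
Hypothesis phi_concave : forall z w t, 0 <= z -> 0 <= w -> 0 <= t <= 1 ->
  t * phi z + (1 - t) * phi w <= phi (t * z + (1 - t) * w).
Hypothesis phi_derivable : forall z, 0 < z -> ex_derive phi z.

Lemma concave_le_tangent z w :
  0 < z -> 0 <= w -> phi w <= phi z + Derive phi z * (w - z).
Proof.
  intros Hz Hw.
  set (f t := phi (z + t * (w - z))).
  assert (Hf : derivable_pt_lim f 0 (Derive phi z * (w - z))).
  { apply is_derive_Reals. unfold f.
    replace (Derive phi z * (w - z)) with (scal (w - z) (Derive phi z))
      by (rewrite Rmult_comm; reflexivity).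
    apply (is_derive_comp phi (fun t => z + t * (w - z))).
    - replace (z + 0 * (w - z)) with z by ring. apply Derive_correct, phi_derivable, Hz.
    - auto_derive; [auto|ring]. }
  enough (phi w - phi z <= Derive phi z * (w - z)) by lra.
  apply (derivable_pt_lim_ge_slope f); [exact Hf|].
  intros t Ht. unfold f.
  replace (z + t * (w - z)) with (t * w + (1 - t) * z) by ring.
  replace (z + 0 * (w - z)) with z by ring.
  pose proof (phi_concave w z t Hw ltac:(lra) ltac:(lra)). lra.
Qed.

Lemma Derive_ge0 z : 0 < z -> 0 <= Derive phi z.
Proof.
  intros Hz. pose proof (concave_le_tangent z (z + 1) Hz ltac:(lra)).
  pose proof (phi_incr z (z + 1) ltac:(lra) ltac:(lra)). lra.
Qed.

Lemma Derive_antitone z1 z2 : 0 < z1 -> z1 <= z2 -> Derive phi z2 <= Derive phi z1.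
Proof.
  intros Hz1 H12. pose proof (concave_le_tangent z1 z2 Hz1 ltac:(lra)).
  pose proof (concave_le_tangent z2 z1 ltac:(lra) ltac:(lra)).
  destruct H12 as [H12 | <-]; [nra|lra].
Qed.

Lemma concave_scale_le z T : 0 <= z -> 1 <= T -> phi (T * z) <= T * phi z.
Proof.
  intros Hz HT.
  assert (HT' : 0 <= / T <= 1).
  { split; [left; apply Rinv_0_lt_compat; lra|].
    rewrite <- Rinv_1. apply Rinv_le_contravar; lra. }
  pose proof (phi_concave (T * z) 0 (/ T) ltac:(nra) ltac:(lra) HT') as Hc.
  replace (/ T * (T * z) + (1 - / T) * 0) with z in Hc by (field; lra).
  pose proof (phi_ge0 0 ltac:(lra)).
  assert (/ T * phi (T * z) <= phi z) by nra.
  replace (phi (T * z)) with (T * (/ T * phi (T * z))) by (field; lra).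
  apply Rmult_le_compat_l; lra.
Qed.

(* At [y = z + h], the tangent inequalities towards [z] and [z + 2h] squeeze
   [Derive phi y] between two difference quotients of [phi] at [z]. *)
Lemma continuous_Derive z : 0 < z -> continuous (Derive phi) z.
Proof.
  intros Hz. apply filterlim_locally. intros eps.
  assert (HD : derivable_pt_lim phi z (Derive phi z))
    by (apply is_derive_Reals, Derive_correct, phi_derivable, Hz).
  destruct (HD (eps / 3)) as [[d Hd] Hdelta]; [destruct eps; simpl; lra|]. simpl in Hdelta.
  assert (Hr : 0 < Rmin (d / 2) (z / 2)) by (apply Rmin_glb_lt; lra).
  exists (mkposreal _ Hr). intros y Hy. change (Rabs (y - z) < Rmin (d / 2) (z / 2)) in Hy.
  change (Rabs (Derive phi y - Derive phi z) < eps).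
  pose proof (Rmin_l (d / 2) (z / 2)). pose proof (Rmin_r (d / 2) (z / 2)).
  set (h := y - z) in *. replace y with (z + h) by (unfold h; ring).
  destruct (Req_dec h 0) as [Hh0|Hh0].
  { rewrite Hh0, Rplus_0_r, Rminus_eq_0, Rabs_R0. destruct eps; simpl; lra. }
  pose proof (Hdelta h Hh0 ltac:(lra)) as HA.
  pose proof (Hdelta (2 * h) ltac:(lra)
                ltac:(rewrite Rabs_mult, (Rabs_pos_eq 2) by lra; lra)) as HB.
  apply Rabs_def2 in Hy.
  apply Rabs_lt_between in HA. apply Rabs_lt_between in HB.
  pose proof (concave_le_tangent (z + h) z ltac:(lra) ltac:(lra)) as T1.
  pose proof (concave_le_tangent (z + h) (z + 2 * h) ltac:(lra) ltac:(lra)) as T2.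
  set (l := Derive phi z) in *. set (Dh := Derive phi (z + h)) in *.
  set (A := (phi (z + h) - phi z) / h) in *.
  set (B := (phi (z + 2 * h) - phi z) / (2 * h)) in *.
  assert (EA : A * h = phi (z + h) - phi z) by (unfold A; field; lra).
  assert (EB : B * (2 * h) = phi (z + 2 * h) - phi z) by (unfold B; field; lra).
  apply Rabs_lt_between.
  destruct (Rlt_dec 0 h).
  - assert (Dh <= A) by nra. assert (2 * B - A <= Dh) by nra. lra.
  - assert (A <= Dh) by nra. assert (Dh <= 2 * B - A) by nra. lra.
Qed.

Lemma continuous_phi z : 0 < z -> continuous phi z.
Proof.
  intros Hz. apply (ex_derive_continuous (K := R_AbsRing) (V := R_NormedModule)).
  apply phi_derivable, Hz.
Qed.

Variable gam : R.
Hypothesis gam_gt2 : 2 < gam.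

Lemma ex_Iinf_surplus t m :
  0 < t -> 0 < m -> exists l, is_Iinf (fun x => phi (m * x) * Rpower x (- gam)) t l.
Proof.
  intros Ht Hm.
  pose proof (Derive_ge0 (m * t) ltac:(nra)) as HD.
  pose proof (is_Iinf_Rpower (- gam) t ltac:(lra) Ht) as Hpow.
  pose proof (is_Iinf_IX gam t gam_gt2 Ht) as HIX.
  eapply ex_Iinf_dominated;
    [ | | exact (is_Iinf_plus _ _ _ _ _ (is_Iinf_scal _ _ (phi (m * t)) _ Hpow)
                           (is_Iinf_scal _ _ (Derive phi (m * t) * m) _ HIX))].
  - intros x Hx. cbv beta. pose proof (Rpower_pos x (- gam)).
    pose proof (phi_ge0 (m * x) ltac:(nra)).
    pose proof (concave_le_tangent (m * t) (m * x) ltac:(nra) ltac:(nra)).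
    assert (0 <= Derive phi (m * t) * (m * t)) by (apply Rmult_le_pos; nra).
    assert (phi (m * x) <= phi (m * t) + Derive phi (m * t) * m * x) by lra.
    rewrite Rpower_1_minus by lra. split; [apply Rmult_le_pos; lra|nra].
  - intros b Hb. apply ex_RInt_continuous_le; [exact Hb|]. intros x Hx.
    apply (continuous_mult (K := R_AbsRing)); [|apply continuous_Rpower; lra].
    apply (continuous_comp (fun x => m * x) phi).
    + apply continuous_Rmult_l.
    + apply continuous_phi. nra.
Qed.

Lemma ex_Iinf_marginal t m :
  0 < t -> 0 < m -> exists l, is_Iinf (fun x => Derive phi (x * m) * Rpower x (1 - gam)) t l.
Proof.
  intros Ht Hm.
  eapply ex_Iinf_dominated;
    [ | | exact (is_Iinf_scal _ _ (Derive phi (t * m)) _ (is_Iinf_IX gam t gam_gt2 Ht))].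
  - intros x Hx. cbv beta. pose proof (Rpower_pos x (1 - gam)).
    pose proof (Derive_ge0 (x * m) ltac:(nra)).
    pose proof (Derive_antitone (t * m) (x * m) ltac:(nra) ltac:(nra)).
    split; nra.
  - intros b Hb. apply ex_RInt_continuous_le; [exact Hb|]. intros x Hx.
    apply (continuous_mult (K := R_AbsRing)); [|apply continuous_Rpower; lra].
    apply (continuous_comp (fun x => x * m) (Derive phi)).
    + apply continuous_Rmult_r.
    + apply continuous_Derive. nra.
Qed.

Definition surplus (t m : R) : R := Iinf (fun x => phi (m * x) * Rpower x (- gam)) t.

Definition marginal_surplus (m : R) : R :=
  Iinf (fun x => Derive phi (x * m) * Rpower x (1 - gam)) (x0 gam).

Lemma surplus_le_tangent m ms :
  0 < m -> 0 < ms -> surplus (x0 gam) m <= surplus (x0 gam) ms + (m - ms) * marginal_surplus ms.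
Proof.
  intros Hm Hms. pose proof (x0_pos gam) as Hx0.
  destruct (ex_Iinf_surplus (x0 gam) m Hx0 Hm) as [l1 H1].
  destruct (ex_Iinf_surplus (x0 gam) ms Hx0 Hms) as [l2 H2].
  destruct (ex_Iinf_marginal (x0 gam) ms Hx0 Hms) as [l3 H3].
  unfold surplus, marginal_surplus.
  rewrite (is_Iinf_unique _ _ _ H1), (is_Iinf_unique _ _ _ H2), (is_Iinf_unique _ _ _ H3).
  eapply is_Iinf_le; [|exact H1|exact (is_Iinf_plus _ _ _ _ _ H2 (is_Iinf_scal _ _ (m - ms) _ H3))].
  intros x Hx. cbv beta.
  pose proof (concave_le_tangent (ms * x) (m * x) ltac:(nra) ltac:(nra)).
  pose proof (Rpower_pos x (- gam)).
  rewrite Rpower_1_minus, (Rmult_comm x ms) by lra. nra.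
Qed.

(* Substituting [x = c y] turns [surplus (c t)] into an integral over [y >= t]
   whose integrand is at most [c^(1 - gam/2)] times that of [surplus t]. *)
Lemma surplus_comp_scal_le t c m :
  0 < t -> 1 <= c -> 0 < m -> surplus (c * t) (Rpower c (gam / 2 - 1) * m) <= surplus t m.
Proof.
  intros Ht Hc Hm.
  set (k := Rpower c (gam / 2 - 1) * m).
  assert (Hk : 0 < k) by (apply Rmult_lt_0_compat; [apply Rpower_pos|lra]).
  destruct (ex_Iinf_surplus (c * t) k ltac:(nra) Hk) as [l1 H1].
  destruct (ex_Iinf_surplus t m Ht Hm) as [l2 H2].
  unfold surplus. rewrite (is_Iinf_unique _ _ _ H1), (is_Iinf_unique _ _ _ H2).
  apply is_Iinf_comp_scal in H1; [|lra].
  eapply is_Iinf_le; [|exact H1|exact H2].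
  intros y Hy. cbv beta.
  set (T := Rpower c (gam / 2)).
  assert (HT : 1 <= T).
  { rewrite <- (Rpower_O c) by lra. apply Rle_Rpower; lra. }
  assert (HkT : k * (c * y) = T * (m * y)).
  { unfold k, T. replace (gam / 2) with (gam / 2 - 1 + 1) at 2 by ring.
    rewrite Rpower_plus, Rpower_1 by lra. ring. }
  assert (Hdecay : c * Rpower c (- gam) * T <= 1).
  { rewrite <- (Rpower_1 c) at 1 by lra. unfold T. rewrite <- !Rpower_plus.
    apply Rle_trans with (Rpower c 0); [apply Rle_Rpower; lra|right; apply Rpower_O; lra]. }
  rewrite HkT, <- Rpower_mult_distr by lra.
  pose proof (concave_scale_le (m * y) T ltac:(nra) HT).
  pose proof (phi_ge0 (m * y) ltac:(nra)).
  pose proof (Rpower_pos c (- gam)). pose proof (Rpower_pos y (- gam)).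
  apply Rle_trans with (c * Rpower c (- gam) * T * (phi (m * y) * Rpower y (- gam))).
  - replace (c * (phi (T * (m * y)) * (Rpower c (- gam) * Rpower y (- gam))))
      with (c * Rpower c (- gam) * Rpower y (- gam) * phi (T * (m * y))) by ring.
    replace (c * Rpower c (- gam) * T * (phi (m * y) * Rpower y (- gam)))
      with (c * Rpower c (- gam) * Rpower y (- gam) * (T * phi (m * y))) by ring.
    apply Rmult_le_compat_l; [|assumption].
    repeat apply Rmult_le_pos; lra.
  - rewrite <- (Rmult_1_l (phi (m * y) * Rpower y (- gam))) at 2.
    apply Rmult_le_compat_r; [apply Rmult_le_pos|]; lra.
Qed.

Lemma marginal_surplus_ge0 m : 0 < m -> 0 <= marginal_surplus m.
Proof.
  intros Hm. pose proof (x0_pos gam) as Hx0.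
  destruct (ex_Iinf_marginal (x0 gam) m Hx0 Hm) as [l Hl].
  unfold marginal_surplus. rewrite (is_Iinf_unique _ _ _ Hl).
  refine (is_Iinf_ge0 _ _ _ _ Hl). intros x Hx.
  apply Rmult_le_pos; [apply Derive_ge0; nra|left; apply Rpower_pos].
Qed.

Lemma marginal_surplus_antitone m1 m2 :
  0 < m1 -> m1 <= m2 -> marginal_surplus m2 <= marginal_surplus m1.
Proof.
  intros Hm1 H12. pose proof (x0_pos gam) as Hx0.
  destruct (ex_Iinf_marginal (x0 gam) m1 Hx0 Hm1) as [l1 H1].
  destruct (ex_Iinf_marginal (x0 gam) m2 Hx0 ltac:(lra)) as [l2 H2].
  unfold marginal_surplus. rewrite (is_Iinf_unique _ _ _ H1), (is_Iinf_unique _ _ _ H2).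
  eapply is_Iinf_le; [|exact H2|exact H1].
  intros x Hx. apply Rmult_le_compat_r; [left; apply Rpower_pos|].
  apply Derive_antitone; nra.
Qed.

Definition marginal_tail (t : R) : R := Iinf (fun w => Derive phi w * Rpower w (1 - gam)) t.

Lemma ex_Iinf_marginal_tail t :
  0 < t -> exists l, is_Iinf (fun w => Derive phi w * Rpower w (1 - gam)) t l.
Proof.
  intros Ht. destruct (ex_Iinf_marginal t 1 Ht ltac:(lra)) as [l Hl].
  exists l. eapply is_Iinf_ext; [|exact Hl]. intros x _. cbv beta. rewrite Rmult_1_r. reflexivity.
Qed.

Lemma marginal_surplus_eq_tail m :
  0 < m -> marginal_surplus m = Rpower m (gam - 2) * marginal_tail (m * x0 gam).
Proof.
  intros Hm. pose proof (x0_pos gam) as Hx0.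
  destruct (ex_Iinf_marginal_tail (m * x0 gam) ltac:(nra)) as [l Hl].
  unfold marginal_tail. rewrite (is_Iinf_unique _ _ _ Hl).
  pose proof (is_Iinf_scal _ _ (Rpower m (gam - 2)) _ (is_Iinf_comp_scal _ _ _ _ Hm Hl)) as Hsub.
  unfold marginal_surplus. apply is_Iinf_unique. eapply is_Iinf_ext; [|exact Hsub].
  intros y Hy. cbv beta.
  rewrite <- (Rpower_mult_distr m y) by lra.
  assert (Hpow : Rpower m (gam - 2) * m * Rpower m (1 - gam) = 1).
  { rewrite <- (Rpower_1 m) at 2 by lra. rewrite <- !Rpower_plus.
    replace (gam - 2 + 1 + (1 - gam)) with 0 by ring. apply Rpower_O. lra. }
  rewrite (Rmult_comm y m).
  transitivity ((Rpower m (gam - 2) * m * Rpower m (1 - gam))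
                * (Derive phi (m * y) * Rpower y (1 - gam))); [ring|].
  rewrite Hpow. ring.
Qed.

(* By Chasles, near [t] the tail is a constant minus [RInt] from [t/2]. *)
Lemma continuous_marginal_tail t : 0 < t -> continuous marginal_tail t.
Proof.
  intros Ht.
  set (f w := Derive phi w * Rpower w (1 - gam)).
  destruct (ex_Iinf_marginal_tail (t / 2) ltac:(lra)) as [l Hl].
  assert (Hr : 0 < t / 2) by lra.
  assert (Hnear : forall y, ball t (t / 2) y -> t / 2 < y).
  { intros y Hy. change (Rabs (y - t) < t / 2) in Hy. apply Rabs_def2 in Hy. lra. }
  apply continuous_ext_loc with (fun s => l - RInt f (t / 2) s).
  - exists (mkposreal _ Hr). intros y Hy. symmetry.
    apply is_Iinf_unique, is_Iinf_Chasles; [pose proof (Hnear y Hy); lra|exact Hl].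
  - apply (continuous_minus (V := R_NormedModule)); [apply continuous_const|].
    apply (continuous_RInt_1 f (t / 2) t (fun s => RInt f (t / 2) s)).
    exists (mkposreal _ Hr). intros y Hy. pose proof (Hnear y Hy).
    apply (RInt_correct (V := R_CompleteNormedModule)), ex_RInt_continuous_le; [lra|].
    intros x Hx. apply (continuous_mult (K := R_AbsRing));
      [apply continuous_Derive|apply continuous_Rpower]; lra.
Qed.

Lemma continuous_marginal_surplus m : 0 < m -> continuous marginal_surplus m.
Proof.
  intros Hm. pose proof (x0_pos gam) as Hx0.
  assert (Hr : 0 < m / 2) by lra.
  apply continuous_ext_loc with (fun s => Rpower s (gam - 2) * marginal_tail (s * x0 gam)).
  - exists (mkposreal _ Hr). intros y Hy. change (Rabs (y - m) < m / 2) in Hy.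
    apply Rabs_def2 in Hy. symmetry. apply marginal_surplus_eq_tail. lra.
  - apply (continuous_mult (K := R_AbsRing)); [apply continuous_Rpower, Hm|].
    apply (continuous_comp (fun s => s * x0 gam) marginal_tail); [apply continuous_Rmult_r|].
    apply continuous_marginal_tail. nra.
Qed.

Variables bet lam a : R.
Hypothesis bet_gt2 : 2 < bet.
Hypothesis lam_gt0 : 0 < lam.
Hypothesis a_ge0 : 0 <= a.

(* A consumer of type [x] gets [phi (usage yt * x)] when all consumers and the
   CPs of type [>= yt] participate. *)
Definition usage (yt : R) : R := sqrt (Ybar bet * IY bet yt).

Definition reduced_welfare (m : R) : R :=
  surplus (x0 gam) m + lam * Xbar gam * m - a * (m * m / Ybar bet).

Definition welfare_slope (m : R) : R :=
  marginal_surplus m + lam * Xbar gam - 2 * a * m / Ybar bet.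

Lemma y0_pos : 0 < y0 bet.
Proof. exact (x0_pos bet). Qed.

Lemma Ybar_pos : 0 < Ybar bet.
Proof. exact (Xbar_pos bet bet_gt2). Qed.

Lemma Ybar_eq : Ybar bet = Rpower (y0 bet) (2 - bet) / (bet - 2).
Proof. exact (Xbar_eq bet bet_gt2). Qed.

Lemma IY_pos yt : y0 bet <= yt -> 0 < IY bet yt.
Proof. intros Hy. apply (IX_pos bet yt bet_gt2). pose proof y0_pos. lra. Qed.

Lemma usage_pos yt : y0 bet <= yt -> 0 < usage yt.
Proof.
  intros Hy. apply sqrt_lt_R0, Rmult_lt_0_compat; [exact Ybar_pos|].
  apply IY_pos, Hy.
Qed.

Lemma usage_sqr yt : y0 bet <= yt -> usage yt * usage yt = Ybar bet * IY bet yt.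
Proof.
  intros Hy. apply sqrt_sqrt, Rmult_le_pos; left; [exact Ybar_pos|].
  apply IY_pos, Hy.
Qed.

Lemma usage_le_Ybar yt : y0 bet <= yt -> usage yt <= Ybar bet.
Proof.
  intros Hy. pose proof Ybar_pos as HY.
  rewrite <- (sqrt_square (Ybar bet)) by lra. apply sqrt_le_1_alt.
  apply Rmult_le_compat_l; [lra|].
  apply (IX_antitone bet (x0 bet)); [exact bet_gt2|apply x0_pos|exact Hy].
Qed.

Lemma usage_y0 : usage (y0 bet) = Ybar bet.
Proof. apply sqrt_square. pose proof Ybar_pos. lra. Qed.

Lemma usage_IX_inv m : 0 < m -> usage (IX_inv bet (m * m / Ybar bet)) = m.
Proof.
  intros Hm. pose proof Ybar_pos as HY. unfold usage, IY.
  change (Iinf (fun y => Rpower y (1 - bet))) with (IX bet).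
  rewrite IX_invK; [|exact bet_gt2|apply Rdiv_lt_0_compat; nra].
  replace (Ybar bet * (m * m / Ybar bet)) with (m * m) by (field; lra).
  apply sqrt_square. lra.
Qed.

Lemma welfare_x0 yt :
  y0 bet <= yt -> welfare gam bet lam a phi (x0 gam) yt = reduced_welfare (usage yt).
Proof.
  intros Hy. pose proof (Xbar_pos gam gam_gt2) as HX. pose proof Ybar_pos as HY.
  pose proof (IY_pos yt Hy) as HV. pose proof (sqrt_lt_R0 _ HX) as HsX.
  unfold welfare, reduced_welfare, T0. change (IX gam (x0 gam)) with (Xbar gam).
  assert (Hspeed : sqrt (Xbar gam * Ybar bet * IY bet yt) / sqrt (Xbar gam) = usage yt).
  { unfold usage. rewrite Rmult_assoc, sqrt_mult by nra. field. lra. }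
  assert (Htraffic : sqrt (Xbar gam * Ybar bet) * sqrt (Xbar gam) * sqrt (IY bet yt)
                     = Xbar gam * usage yt).
  { unfold usage. rewrite !sqrt_mult by lra.
    rewrite <- (sqrt_sqrt (Xbar gam)) at 3 by lra. ring. }
  assert (HV' : usage yt * usage yt / Ybar bet = IY bet yt)
    by (rewrite usage_sqr by exact Hy; field; lra).
  rewrite Hspeed, HV'. unfold surplus.
  replace (lam * Xbar gam * usage yt) with (lam * (Xbar gam * usage yt)) by ring.
  rewrite <- Htraffic. ring.
Qed.

Lemma consumer_rate_scale c yt :
  0 < c -> y0 bet <= yt ->
  sqrt (T0 gam bet * IY bet yt) / sqrt (IX gam (c * x0 gam)) = Rpower c (gam / 2 - 1) * usage yt.
Proof.
  intros Hc Hy. pose proof (x0_pos gam). pose proof (Xbar_pos gam gam_gt2) as HX.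
  pose proof Ybar_pos. pose proof (IY_pos yt Hy). pose proof (sqrt_lt_R0 _ HX).
  assert (HIX : IX gam (c * x0 gam) = Rpower c (2 - gam) * Xbar gam).
  { rewrite IX_eq, Xbar_eq, <- Rpower_mult_distr by nra. field. lra. }
  assert (Hinv : Rpower c (gam / 2 - 1) * Rpower c ((2 - gam) / 2) = 1).
  { rewrite <- Rpower_plus. replace (gam / 2 - 1 + (2 - gam) / 2) with 0 by field.
    apply Rpower_O, Hc. }
  unfold T0. rewrite HIX, Rmult_assoc, (sqrt_mult (Xbar gam)) by nra. fold (usage yt).
  rewrite sqrt_mult, sqrt_Rpower by (lra || (left; apply Rpower_pos)).
  pose proof (Rpower_pos c ((2 - gam) / 2)).
  field_simplify_eq; [|lra].
  transitivity (usage yt * (Rpower c (gam / 2 - 1) * Rpower c ((2 - gam) / 2)));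
    [rewrite Hinv|]; ring.
Qed.

Lemma traffic_term_le xt yt :
  x0 gam <= xt -> y0 bet <= yt ->
  sqrt (T0 gam bet) * sqrt (IX gam xt) * sqrt (IY bet yt) <= Xbar gam * usage yt.
Proof.
  intros Hxt Hy. pose proof (x0_pos gam) as Hx0. pose proof (Xbar_pos gam gam_gt2).
  pose proof Ybar_pos. pose proof (IY_pos yt Hy).
  pose proof (sqrt_le_1_alt _ _ (IX_antitone gam (x0 gam) xt gam_gt2 Hx0 Hxt)).
  change (IX gam (x0 gam)) with (Xbar gam) in *.
  unfold T0, usage. rewrite !sqrt_mult by lra.
  pose proof (sqrt_sqrt (Xbar gam) ltac:(lra)).
  pose proof (sqrt_pos (Ybar bet)). pose proof (sqrt_pos (IY bet yt)).
  pose proof (sqrt_pos (Xbar gam)).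
  assert (0 <= sqrt (Ybar bet) * sqrt (IY bet yt) * sqrt (Xbar gam))
    by (repeat apply Rmult_le_pos; lra).
  nra.
Qed.

Lemma welfare_le_x0 xt yt :
  x0 gam <= xt -> y0 bet <= yt ->
  welfare gam bet lam a phi xt yt <= welfare gam bet lam a phi (x0 gam) yt.
Proof.
  intros Hxt Hy. pose proof (x0_pos gam) as Hx0. pose proof Ybar_pos.
  pose proof (traffic_term_le xt yt Hxt Hy) as Htraffic.
  rewrite welfare_x0 by exact Hy.
  destruct (ex_intro (fun c => 1 <= c /\ xt = c * x0 gam) (xt / x0 gam))
    as [c [Hc ->]].
  { split; [|field; lra].
    unfold Rdiv. rewrite <- (Rinv_r (x0 gam)) by lra.
    apply Rmult_le_compat_r; [left; apply Rinv_0_lt_compat|]; lra. }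
  pose proof (surplus_comp_scal_le (x0 gam) c (usage yt) Hx0 Hc (usage_pos yt Hy)).
  unfold welfare, reduced_welfare. rewrite consumer_rate_scale by lra.
  rewrite (usage_sqr yt Hy). unfold surplus in *.
  replace (Ybar bet * IY bet yt / Ybar bet) with (IY bet yt) by (field; lra).
  pose proof (Rmult_le_compat_l lam _ _ (Rlt_le _ _ lam_gt0) Htraffic). nra.
Qed.

Lemma reduced_welfare_le m ms :
  0 < m -> 0 < ms -> reduced_welfare m <= reduced_welfare ms + (m - ms) * welfare_slope ms.
Proof.
  intros Hm Hms. pose proof Ybar_pos as HY.
  pose proof (surplus_le_tangent m ms Hm Hms).
  assert (0 <= a * ((m - ms) * (m - ms)) / Ybar bet).
  { apply Rdiv_le_0_compat; [apply Rmult_le_pos; [lra|apply Rle_0_sqr]|lra]. }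
  unfold reduced_welfare, welfare_slope.
  replace (a * (m * m / Ybar bet))
    with (a * (ms * ms / Ybar bet) + (m - ms) * (2 * a * ms / Ybar bet)
          + a * ((m - ms) * (m - ms)) / Ybar bet) by (field; lra).
  nra.
Qed.

Lemma welfare_max_of_slope ys :
  y0 bet <= ys ->
  (forall m, 0 < m <= Ybar bet -> (m - usage ys) * welfare_slope (usage ys) <= 0) ->
  welfare_max gam bet lam a phi (x0 gam) ys.
Proof.
  intros Hys Hslope. split; [lra|]. split; [exact Hys|].
  intros xt yt Hxt Hyt.
  apply Rle_trans with (1 := welfare_le_x0 xt yt Hxt Hyt).
  rewrite !welfare_x0 by assumption.
  pose proof (reduced_welfare_le (usage yt) (usage ys) (usage_pos yt Hyt) (usage_pos ys Hys)).
  pose proof (Hslope (usage yt) (conj (usage_pos yt Hyt) (usage_le_Ybar yt Hyt))).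
  lra.
Qed.

Lemma a_thr_slope : a_thr gam bet lam phi = a + welfare_slope (Ybar bet) / 2.
Proof.
  pose proof Ybar_pos. unfold a_thr, welfare_slope, marginal_surplus. field. lra.
Qed.

Lemma yhat_eq_slope yt :
  y0 bet <= yt ->
  yhat_eq gam bet lam a phi yt = - (Ybar bet / (2 * usage yt)) * welfare_slope (usage yt).
Proof.
  intros Hy. pose proof Ybar_pos as HY. pose proof (IY_pos yt Hy) as HV.
  pose proof (sqrt_lt_R0 _ HY). pose proof (sqrt_lt_R0 _ HV).
  assert (Hratio : sqrt (Ybar bet) / sqrt (IY bet yt) = Ybar bet / usage yt).
  { unfold usage. rewrite sqrt_mult by lra.
    rewrite <- (sqrt_sqrt (Ybar bet)) at 2 by lra. field. lra. }
  unfold yhat_eq. rewrite Hratio.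
  change (Iinf (fun x => Derive phi (x * sqrt (Ybar bet * IY bet yt)) * Rpower x (1 - gam))
            (x0 gam)) with (marginal_surplus (usage yt)).
  pose proof (usage_pos yt Hy).
  unfold welfare_slope. field. split; lra.
Qed.

Lemma welfare_slope_decr m1 m2 :
  0 < a -> 0 < m1 -> m1 < m2 -> welfare_slope m2 < welfare_slope m1.
Proof.
  intros Ha Hm1 H12. pose proof Ybar_pos.
  pose proof (marginal_surplus_antitone m1 m2 Hm1 (Rlt_le _ _ H12)).
  assert (2 * a * m1 / Ybar bet < 2 * a * m2 / Ybar bet).
  { apply Rmult_lt_compat_r; [apply Rinv_0_lt_compat; lra|nra]. }
  unfold welfare_slope. lra.
Qed.

Lemma continuous_welfare_slope m : 0 < m -> continuous welfare_slope m.
Proof.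
  intros Hm. unfold welfare_slope.
  apply (continuous_minus (V := R_NormedModule)).
  - apply (continuous_plus (V := R_NormedModule));
      [apply continuous_marginal_surplus, Hm|apply continuous_const].
  - apply (continuous_ext (fun m => (2 * a / Ybar bet) * m)); [|apply continuous_Rmult_l].
    intros x. pose proof Ybar_pos. simpl. field. lra.
Qed.

(* [welfare_slope] is positive for small [m], since [marginal_surplus >= 0],
   and [welfare_slope (Ybar bet) < 0] exactly when [a_thr < a]. *)
Lemma welfare_slope_root :
  a_thr gam bet lam phi < a -> exists ms, 0 < ms < Ybar bet /\ welfare_slope ms = 0.
Proof.
  intros Ha. rewrite a_thr_slope in Ha.
  pose proof Ybar_pos as HY. pose proof (Xbar_pos gam gam_gt2) as HX.
  pose proof (marginal_surplus_ge0 (Ybar bet) HY).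
  assert (HslopeY : welfare_slope (Ybar bet) < 0) by lra.
  assert (Hapos : 0 < a).
  { unfold welfare_slope in HslopeY.
    replace (2 * a * Ybar bet / Ybar bet) with (2 * a) in HslopeY by (field; lra).
    pose proof (Rmult_lt_0_compat _ _ lam_gt0 HX). lra. }
  pose proof (Rmin_l (Ybar bet / 2) (lam * Xbar gam * Ybar bet / (4 * a))) as Hsl.
  pose proof (Rmin_r (Ybar bet / 2) (lam * Xbar gam * Ybar bet / (4 * a))) as Hsr.
  set (s := Rmin (Ybar bet / 2) (lam * Xbar gam * Ybar bet / (4 * a))) in *.
  assert (Hs : 0 < s < Ybar bet).
  { split; [|lra]. apply Rmin_glb_lt; [lra|].
    apply Rdiv_lt_0_compat; [|lra]. apply Rmult_lt_0_compat; nra. }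
  assert (Hslope_s : 0 < welfare_slope s).
  { pose proof (marginal_surplus_ge0 s (proj1 Hs)).
    assert (2 * a * s / Ybar bet <= lam * Xbar gam / 2).
    { apply (Rmult_le_reg_r (Ybar bet)); [lra|].
      apply (Rmult_le_compat_r (4 * a)) in Hsr; [|lra].
      replace (lam * Xbar gam * Ybar bet / (4 * a) * (4 * a)) with (lam * Xbar gam * Ybar bet)
        in Hsr by (field; lra).
      field_simplify; lra. }
    pose proof (Rmult_lt_0_compat _ _ lam_gt0 HX).
    unfold welfare_slope. lra. }
  destruct (Ranalysis5.IVT_interv (fun m => - welfare_slope m) s (Ybar bet)) as [ms [Hms Hroot]].
  - intros m Hm. apply continuity_pt_opp, continuity_pt_filterlim, continuous_welfare_slope. lra.
  - lra.
  - lra.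
  - lra.
  - exists ms. split; [|lra].
    split; [lra|]. destruct (Req_dec ms (Ybar bet)) as [->|]; lra.
Qed.

Lemma speed_x0 yt : y0 bet <= yt -> speed gam bet (x0 gam) yt = Ybar bet / usage yt.
Proof.
  intros Hy. pose proof (Xbar_pos gam gam_gt2) as HX. pose proof Ybar_pos as HY.
  pose proof (IY_pos yt Hy) as HV. pose proof (usage_pos yt Hy).
  unfold speed, traffic, T0. change (IX gam (x0 gam)) with (Xbar gam).
  replace (Xbar gam * Ybar bet * Xbar gam * IY bet yt)
    with ((Xbar gam * Xbar gam) * (Ybar bet * IY bet yt)) by ring.
  rewrite sqrt_mult, sqrt_square by nra. fold (usage yt). field. lra.
Qed.

Lemma cp_utility_x0 b yt y :
  y0 bet <= yt ->
  cp_utility gam bet lam a b (x0 gam) yt y = y * (lam * (Ybar bet / usage yt) * Xbar gam - b - a).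
Proof.
  intros Hy. unfold cp_utility. rewrite speed_x0 by exact Hy.
  rewrite (Iinf_scal_IX gam (x0 gam) (Ybar bet / usage yt * y)); [|exact gam_gt2|apply x0_pos|].
  - change (IX gam (x0 gam)) with (Xbar gam). ring.
  - intros x. ring.
Qed.

Lemma consumer_utility_x0 c yt x :
  y0 bet <= yt -> consumer_utility gam bet phi c (x0 gam) yt x = phi (usage yt * x) - c.
Proof.
  intros Hy. pose proof (usage_pos yt Hy). pose proof Ybar_pos. pose proof y0_pos.
  unfold consumer_utility. rewrite speed_x0 by exact Hy.
  rewrite (Iinf_scal_IX bet yt (Ybar bet / usage yt * x)); [|exact bet_gt2|lra|reflexivity].
  change (IX bet yt) with (IY bet yt).
  replace (IY bet yt) with (usage yt * usage yt / Ybar bet)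
    by (rewrite usage_sqr by exact Hy; field; lra).
  f_equal. f_equal. field. lra.
Qed.

Lemma optimum_low_cost :
  a <= a_thr gam bet lam phi -> welfare_max gam bet lam a phi (x0 gam) (y0 bet).
Proof.
  intros Ha. rewrite a_thr_slope in Ha.
  apply welfare_max_of_slope; [lra|]. intros m Hm. rewrite usage_y0.
  apply Rmult_le_0_r; lra.
Qed.

Lemma prices_low_cost b c :
  implements gam bet lam a phi b c (x0 gam) (y0 bet) ->
  b <= lam / (gam - 2) * Rpower (x0 gam) (2 - gam) - a /\
  c <= phi (1 / (bet - 2) * Rpower (y0 bet) (2 - bet) * x0 gam).
Proof.
  intros [Hcons Hcp]. pose proof y0_pos. pose proof Ybar_pos. pose proof (x0_pos gam).
  split.
  - destruct (Hcp (y0 bet) (Rle_refl _)) as [Hjoin _].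
    specialize (Hjoin (Rle_refl _)).
    rewrite cp_utility_x0, usage_y0 in Hjoin by lra.
    replace (lam / (gam - 2) * Rpower (x0 gam) (2 - gam)) with (lam * Xbar gam)
      by (rewrite Xbar_eq by exact gam_gt2; field; lra).
    replace (Ybar bet / Ybar bet) with 1 in Hjoin by (field; lra).
    assert (0 <= lam * 1 * Xbar gam - b - a); [|lra].
    apply (Rmult_le_reg_l (y0 bet)); lra.
  - destruct (Hcons (x0 gam) (Rle_refl _)) as [Hjoin _].
    specialize (Hjoin (Rle_refl _)).
    rewrite consumer_utility_x0, usage_y0 in Hjoin by lra.
    replace (1 / (bet - 2) * Rpower (y0 bet) (2 - bet)) with (Ybar bet)
      by (rewrite Ybar_eq; field; lra).
    lra.
Qed.

Lemma a_thr_pos : 0 < a_thr gam bet lam phi.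
Proof.
  pose proof (marginal_surplus_ge0 (Ybar bet) Ybar_pos).
  pose proof (Rmult_lt_0_compat _ _ lam_gt0 (Xbar_pos gam gam_gt2)).
  unfold a_thr. fold (marginal_surplus (Ybar bet)). lra.
Qed.

Lemma yhat_exists :
  a_thr gam bet lam phi < a -> exists yh, y0 bet < yh /\ yhat_eq gam bet lam a phi yh = 0.
Proof.
  intros Ha. destruct (welfare_slope_root Ha) as [ms [[Hms HmsY] Hroot]].
  pose proof Ybar_pos as HY. pose proof y0_pos.
  set (yh := IX_inv bet (ms * ms / Ybar bet)).
  assert (HV : 0 < ms * ms / Ybar bet) by (apply Rdiv_lt_0_compat; nra).
  assert (HIY : IY bet yh = ms * ms / Ybar bet) by exact (IX_invK bet _ bet_gt2 HV).
  assert (Hyh : y0 bet < yh).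
  { apply Rnot_le_lt. intros Hle.
    pose proof (IX_antitone bet yh (y0 bet) bet_gt2 (Rpower_pos _ _) Hle) as Hanti.
    change (IY bet (y0 bet) <= IY bet yh) in Hanti. fold (Ybar bet) in Hanti.
    rewrite HIY in Hanti.
    apply (Rmult_le_compat_r (Ybar bet)) in Hanti; [|lra].
    replace (ms * ms / Ybar bet * Ybar bet) with (ms * ms) in Hanti by (field; lra). nra. }
  exists yh. split; [exact Hyh|].
  rewrite yhat_eq_slope by lra. unfold yh. rewrite usage_IX_inv, Hroot by exact Hms. ring.
Qed.

Lemma yhat_eq_0_slope yt :
  y0 bet <= yt -> yhat_eq gam bet lam a phi yt = 0 -> welfare_slope (usage yt) = 0.
Proof.
  intros Hy Heq. rewrite yhat_eq_slope in Heq by exact Hy.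
  pose proof Ybar_pos. pose proof (usage_pos yt Hy).
  apply Rmult_integral in Heq as [Hfactor|]; [|assumption].
  exfalso. assert (0 < Ybar bet / (2 * usage yt)) by (apply Rdiv_lt_0_compat; lra). lra.
Qed.

Lemma yhat_unique y1 y2 :
  0 < a -> y0 bet <= y1 -> y0 bet <= y2 ->
  yhat_eq gam bet lam a phi y1 = 0 -> yhat_eq gam bet lam a phi y2 = 0 -> y1 = y2.
Proof.
  intros Ha Hy1 Hy2 Heq1 Heq2. pose proof y0_pos.
  apply yhat_eq_0_slope in Heq1; [|exact Hy1]. apply yhat_eq_0_slope in Heq2; [|exact Hy2].
  assert (Husage : usage y1 = usage y2).
  { pose proof (usage_pos y1 Hy1). pose proof (usage_pos y2 Hy2).
    destruct (Rtotal_order (usage y1) (usage y2)) as [Hlt|[Heq|Hlt]]; [| exact Heq |].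
    - pose proof (welfare_slope_decr _ _ Ha (usage_pos y1 Hy1) Hlt). lra.
    - pose proof (welfare_slope_decr _ _ Ha (usage_pos y2 Hy2) Hlt). lra. }
  assert (HIY : IY bet y1 = IY bet y2).
  { pose proof Ybar_pos. apply (Rmult_eq_reg_l (Ybar bet)); [|lra].
    rewrite <- !usage_sqr, Husage by assumption. reflexivity. }
  rewrite <- (IX_K bet y1), <- (IX_K bet y2) by (assumption || lra).
  change (IX_inv bet (IY bet y1) = IX_inv bet (IY bet y2)). rewrite HIY. reflexivity.
Qed.

Lemma optimum_high_cost yh :
  y0 bet <= yh -> yhat_eq gam bet lam a phi yh = 0 -> welfare_max gam bet lam a phi (x0 gam) yh.
Proof.
  intros Hyh Heq. apply welfare_max_of_slope; [exact Hyh|].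
  intros m _. rewrite (yhat_eq_0_slope yh Hyh Heq). lra.
Qed.

Lemma prices_high_cost yh b c :
  0 < a -> y0 bet < yh -> yhat_eq gam bet lam a phi yh = 0 ->
  implements gam bet lam a phi b c (x0 gam) yh ->
  b = (2 * lam /
        (/ Xbar gam *
           Iinf (fun x => Derive phi (sqrt (Ybar bet * (1 / (bet - 2) * Rpower yh (2 - bet))) * x)
                          * Rpower x (1 - gam)) (x0 gam)
         + lam) - 1) * a /\
  c <= phi (sqrt (Ybar bet * (1 / (bet - 2) * Rpower yh (2 - bet))) * x0 gam).
Proof.
  intros Ha Hyh Heq [Hcons Hcp].
  pose proof y0_pos. pose proof Ybar_pos. pose proof (x0_pos gam).
  pose proof (Xbar_pos gam gam_gt2).
  assert (Hms : sqrt (Ybar bet * (1 / (bet - 2) * Rpower yh (2 - bet))) = usage yh).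
  { unfold usage. change (IY bet yh) with (IX bet yh). rewrite IX_eq by lra.
    f_equal. f_equal. field. lra. }
  rewrite Hms. pose proof (usage_pos yh ltac:(lra)) as Hm.
  apply yhat_eq_0_slope in Heq; [|lra]. unfold welfare_slope in Heq.
  assert (HJ : Iinf (fun x => Derive phi (usage yh * x) * Rpower x (1 - gam)) (x0 gam)
               = 2 * a * usage yh / Ybar bet - lam * Xbar gam).
  { unfold marginal_surplus in Heq.
    replace (fun x => Derive phi (usage yh * x) * Rpower x (1 - gam))
      with (fun x => Derive phi (x * usage yh) * Rpower x (1 - gam))
      by (apply functional_extensionality; intros x; rewrite (Rmult_comm (usage yh) x);
          reflexivity).
    lra. }
  split.
  - destruct (Hcp (y0 bet) (Rle_refl _)) as [_ Hstay]. specialize (Hstay Hyh).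
    destruct (Hcp yh ltac:(lra)) as [Hjoin _]. specialize (Hjoin (Rle_refl _)).
    rewrite cp_utility_x0 in Hstay, Hjoin by lra.
    assert (Hb : b = lam * (Ybar bet / usage yh) * Xbar gam - a).
    { assert (lam * (Ybar bet / usage yh) * Xbar gam - b - a <= 0)
        by (apply (Rmult_le_reg_l (y0 bet)); lra).
      assert (0 <= lam * (Ybar bet / usage yh) * Xbar gam - b - a)
        by (apply (Rmult_le_reg_l yh); lra).
      lra. }
    rewrite HJ, Hb. field. repeat split; try lra.
    intros Hz. assert (a * usage yh = 0) by (field_simplify in Hz; lra). nra.
  - destruct (Hcons (x0 gam) (Rle_refl _)) as [Hjoin _]. specialize (Hjoin (Rle_refl _)).
    rewrite consumer_utility_x0 in Hjoin by lra. lra.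
Qed.

End Welfare.

Theorem theorem3 (gam bet lam a : R) (phi : R -> R) :
  2 < gam -> 2 < bet -> 0 < lam -> 0 <= a ->
  (* phi : [0,oo) -> R nonnegative, increasing, concave, differentiable *)
  (forall z, 0 <= z -> 0 <= phi z) ->
  (forall z w, 0 <= z -> z <= w -> phi z <= phi w) ->
  (forall z w t, 0 <= z -> 0 <= w -> 0 <= t <= 1 ->
     t * phi z + (1 - t) * phi w <= phi (t * z + (1 - t) * w)) ->
  (forall z, 0 < z -> ex_derive phi z) ->
  (exists l, filterlim (fun h => (phi h - phi 0) / h) (at_right 0) (locally l)) ->
  (a <= a_thr gam bet lam phi ->
     welfare_max gam bet lam a phi (x0 gam) (y0 bet) /\
     forall b c, implements gam bet lam a phi b c (x0 gam) (y0 bet) ->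
       b <= lam / (gam - 2) * Rpower (x0 gam) (2 - gam) - a /\
       c <= phi (1 / (bet - 2) * Rpower (y0 bet) (2 - bet) * x0 gam)) /\
  (a_thr gam bet lam phi < a ->
     exists yh, y0 bet <= yh /\ yhat_eq gam bet lam a phi yh = 0 /\
       (forall y, y0 bet <= y -> yhat_eq gam bet lam a phi y = 0 -> y = yh) /\
       welfare_max gam bet lam a phi (x0 gam) yh /\
       forall b c, implements gam bet lam a phi b c (x0 gam) yh ->
         b = (2 * lam /
               (/ Xbar gam *
                  Iinf (fun x => Derive phi
                          (sqrt (Ybar bet * (1 / (bet - 2) * Rpower yh (2 - bet))) * x)
                        * Rpower x (1 - gam)) (x0 gam)
                + lam) - 1) * a /\
         c <= phi (sqrt (Ybar bet * (1 / (bet - 2) * Rpower yh (2 - bet))) * x0 gam)).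
Proof.
  intros Hg Hb Hlam Ha Hnn Hmon Hconc Hder _.
  split.
  - intros Hlow. split.
    + eapply optimum_low_cost with (gam := gam) (bet := bet); eassumption.
    + intros b c. eapply prices_low_cost with (gam := gam) (bet := bet); eassumption.
  - intros Hhigh.
    assert (Hapos : 0 < a).
    { enough (0 < a_thr gam bet lam phi) by lra.
      eapply a_thr_pos with (gam := gam) (bet := bet); eassumption. }
    assert (Hyhat : exists yh, y0 bet < yh /\ yhat_eq gam bet lam a phi yh = 0)
      by (eapply yhat_exists with (gam := gam) (bet := bet); eassumption).
    destruct Hyhat as [yh [Hyh Hroot]].
    exists yh. split; [lra|]. split; [exact Hroot|]. split; [|split].
    + intros y Hy Hyroot.
      eapply yhat_unique with (gam := gam) (bet := bet); try eassumption; lra.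
    + eapply optimum_high_cost with (gam := gam) (bet := bet); try eassumption; lra.
    + intros b c. eapply prices_high_cost with (gam := gam) (bet := bet); eassumption.
Qed.
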